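(* Let $A \in \mathbb{R}^{p \times n}$, $G \in \mathbb{R}^{p \times m}$, $c_x \in \mathbb{R}^n$, $c_y \in \mathbb{R}^m$, and for a right-hand side vector $b \in \mathbb{R}^p$ consider the mixed-binary linear program \[ g(b) := \min_{x, y} \; c_x^T x + c_y^T y \quad \text{s.t.} \quad Ax + Gy \geq b,\; x \in \{0,1\}^n,\; y \in \mathbb{R}^m . \] Fix $b \in \mathbb{R}^p$. Suppose $(x^*, y^* )$ is an optimal solution of this problem (with right-hand side $b$) which is unique in the integer component, i.e. every optimal solution of the problem with right-hand side $b$ has integer part $x^*$. Suppose moreover that there is a neighborhood of $b$ such that for every $\hat b$ in this neighborhood the problem with right-hand side $\hat b$ has a feasible solution whose integer component is $x^*$. Then there exists a neighborhood of $b$ such that for all $\hat b$ in this neighborhood, $x^*$ is the integer part of the optimal solution to the corresponding problem with right-hand side $\hat b$. *)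

From HB Require Import structures.
From mathcomp Require Import all_boot all_order all_algebra.
From mathcomp Require Import reals.
Set Implicit Arguments. Unset Strict Implicit. Unset Printing Implicit Defensive.
Import Order.TTheory GRing.Theory Num.Theory.
Local Open Scope ring_scope.

Section MBLP.
Variables (R : realType) (p n m : nat).
Variables (A : 'M[R]_(p, n)) (G : 'M[R]_(p, m)) (cx : 'cV[R]_n) (cy : 'cV[R]_m).

Definition binary_vec (x : 'cV[R]_n) : Prop :=
  forall i : 'I_n, x i 0 = 0 \/ x i 0 = 1.

Definition mblp_feasible (b : 'cV[R]_p) (x : 'cV[R]_n) (y : 'cV[R]_m) : Prop :=
  binary_vec x /\ forall i : 'I_p, b i 0 <= (A *m x + G *m y) i 0.

Definition mblp_obj (x : 'cV[R]_n) (y : 'cV[R]_m) : R :=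
  (cx^T *m x + cy^T *m y) 0 0.

Definition mblp_optimal (b : 'cV[R]_p) (x : 'cV[R]_n) (y : 'cV[R]_m) : Prop :=
  mblp_feasible b x y /\
  forall x' y', mblp_feasible b x' y' -> mblp_obj x y <= mblp_obj x' y'.

Definition in_ball (b : 'cV[R]_p) (eps : R) (bhat : 'cV[R]_p) : Prop :=
  forall i : 'I_p, `|bhat i 0 - b i 0| < eps.

End MBLP.

From HB Require Import structures.
From mathcomp Require Import all_boot all_order all_algebra.
From mathcomp Require Import reals lra.
Import Order.TTheory GRing.Theory Num.Theory.
Local Open Scope ring_scope.

(* Fix the binary part x.  Eliminating y by Fourier-Motzkin shows that the set of
   (r, t) such that x has a completion y, feasible for the right-hand side r, of
   cost at most t is a polyhedron { B r + e + t beta >= 0 } with beta >= 0.  Hence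
   the LP with x fixed attains its minimum when it is feasible and bounded, an
   inequality violated at (b, v) stays violated at (r, t) for r near b and
   t <= v + eps, and one with positive t-coefficient holding at (b, v) holds at
   (r, v + eps) for r near b.
   Let v be the optimal value at b.  By uniqueness no binary x <> x* has a
   completion of cost <= v at b, hence (there are finitely many x) none has one of
   cost <= v + eps for r near b, while x*, feasible near b by assumption, keeps a
   completion of cost <= v + eps there. *)

Section LinearInequalities.
Local Set Implicit Arguments. Local Unset Strict Implicit.
Variable R : realFieldType.

Definition nnegmx k l (M : 'M[R]_(k, l)) : Prop := forall i j, 0 <= M i j.

Lemma nnegcvP k (v : 'cV[R]_k) : nnegmx v <-> forall i, 0 <= v i 0.
Proof. by split=> [v0 i | v0 i j]; rewrite ?(ord1 j). Qed.

Lemma nnegcvPn k (v : 'cV[R]_k) : ~ nnegmx v -> exists i, v i 0 < 0.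
Proof.
move=> nv; have /forallPn [i] : ~~ [forall i, 0 <= v i 0].
  by apply/negP => /forallP v0; apply/nv/nnegcvP.
by rewrite -ltNge; exists i.
Qed.

Lemma nnegmx_mul k l h (M : 'M[R]_(k, l)) (N : 'M[R]_(l, h)) :
  nnegmx M -> nnegmx N -> nnegmx (M *m N).
Proof. by move=> M0 N0 i j; rewrite mxE sumr_ge0 // => a _; rewrite mulr_ge0. Qed.

Lemma nnegmx_col_mx k1 k2 l (X : 'M[R]_(k1, l)) (Y : 'M[R]_(k2, l)) :
  nnegmx (col_mx X Y) <-> nnegmx X /\ nnegmx Y.
Proof.
split=> [XY0 | [X0 Y0] i j].
  by split=> i j; [rewrite -(col_mxEu X Y) | rewrite -(col_mxEd X Y)].
by case: (split_ordP i) => a ->; rewrite ?col_mxEu ?col_mxEd.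
Qed.

Lemma nnegmx_mul_rows (I : finType) k l (w : I -> 'rV[R]_k) (M : 'M[R]_(k, l)) :
  nnegmx ((\matrix_(a < #|I|) w (enum_val a)) *m M) <-> forall c, nnegmx (w c *m M).
Proof.
have rowsE a j : ((\matrix_(a < #|I|) w (enum_val a)) *m M) a j = (w (enum_val a) *m M) 0 j.
  by transitivity (row a ((\matrix_(a < #|I|) w (enum_val a)) *m M) 0 j);
    [rewrite [RHS]mxE | rewrite row_mul rowK].
split=> [wM0 c i j | wM0 a j]; last by rewrite rowsE; apply: wM0.
by rewrite (ord1 i) -(enum_rankK c) -rowsE; apply: wM0.
Qed.

Lemma separating_point (I J : finType) (P : pred I) (Q : pred J) (l : I -> R) (u : J -> R) :
  (forall i j, P i -> Q j -> l i <= u j) ->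
  exists s, (forall i, P i -> l i <= s) /\ (forall j, Q j -> s <= u j).
Proof.
move=> lu; case: (pickP P) => [i0 Pi0 | P0].
  exists (\big[Order.max/l i0]_(i | P i) l i); split=> [i Pi | j Qj].
    exact: le_bigmax_cond.
  by apply/bigmax_leP; split=> [|i Pi]; apply: lu.
exists (\big[Order.min/0]_(j | Q j) u j); split=> [i | j Qj]; first by rewrite P0.
exact: bigmin_le_cond.
Qed.

Lemma solvable_one_var (I : finType) (v d : I -> R) :
  (exists s, forall i, 0 <= v i + s * d i) <->
  (forall i, d i = 0 -> 0 <= v i) /\
  (forall i j, 0 < d i -> d j < 0 -> 0 <= d i * v j - d j * v i).
Proof.
split=> [[s vd0] | [v0 vij0]].
  split=> [i di0 | i j di0 dj0]; first by have := vd0 i; rewrite di0 mulr0 addr0.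
  have := vd0 i; have := vd0 j; nra.
have bounds i j : 0 < d i -> d j < 0 -> - v i / d i <= - v j / d j.
  move=> di0 dj0; rewrite ler_pdivrMr // mulrAC ler_ndivlMr //.
  by have := vij0 i j di0 dj0; nra.
have [s [ls su]] := separating_point (P := fun i => 0 < d i) (Q := fun j => d j < 0) bounds.
exists s => i; have [di0 | di0 | di0] := ltrgtP (d i) 0.
- by have := su i di0; rewrite ler_ndivlMr //; lra.
- by have := ls i di0; rewrite ler_pdivrMr //; lra.
- by rewrite di0 mulr0 addr0 v0.
Qed.

Lemma fourier_motzkin_step q (d : 'cV[R]_q) :
  exists q' (W : 'M[R]_(q', q)), nnegmx W /\
    forall v, (exists s, nnegmx (v + s *: d)) <-> nnegmx (W *m v).
Proof.
(* Indices outside the two Fourier-Motzkin cases give zero rows, which are harmless. *)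
pose w (c : 'I_q + 'I_q * 'I_q) : 'rV[R]_q := match c with
  | inl i => if d i 0 == 0 then 'e_i else 0
  | inr (i, j) => if (0 < d i 0) && (d j 0 < 0)
                  then d i 0 *: 'e_j + (- d j 0) *: 'e_i else 0 end.
have eE i (v : 'cV[R]_q) : ('e_i : 'rV_q) *m v = (v i 0)%:M.
  by rewrite -rowE [LHS]mx11_scalar mxE.
exists #|{: 'I_q + 'I_q * 'I_q}|, (\matrix_(a < _) w (enum_val a)); split.
  rewrite -[X in nnegmx X]mulmx1; apply/nnegmx_mul_rows => -[i | [i j]] a b.
    by rewrite mulmx1 /=; case: eqP => _; rewrite !mxE ?ler0n.
  rewrite mulmx1 /=; case: andP => [[di0 dj0] | _]; rewrite !mxE //.
  by rewrite addr_ge0 // mulr_ge0 ?ler0n // ?oppr_ge0 ltW.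
move=> v; have -> : (exists s, nnegmx (v + s *: d)) <->
    exists s, forall i, 0 <= v i 0 + s * d i 0.
  by split=> -[s vd0]; exists s; [move=> i; have := vd0 i 0 | move=> i j; rewrite (ord1 j)];
     rewrite !mxE.
rewrite solvable_one_var nnegmx_mul_rows; split=> [[v0 vij0] [i | [i j]] a b | wv0].
- by rewrite !ord1 /=; case: eqP => [/v0 | _]; rewrite ?eE ?mul0mx !mxE ?eqxx ?mulr1n.
- rewrite !ord1 /=; case: andP => [[di0 dj0] | _]; last by rewrite mul0mx mxE.
  by rewrite mulmxDl -!scalemxAl !eE !mxE eqxx !mulr1n mulNr; apply: vij0.
split=> [i di0 | i j di0 dj0].
  by have := wv0 (inl i) 0 0; rewrite /= di0 eqxx eE mxE mulr1n.
have := wv0 (inr (i, j)) 0 0; rewrite /= di0 dj0 /=.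
by rewrite mulmxDl -!scalemxAl !eE !mxE eqxx !mulr1n mulNr.
Qed.

Lemma fourier_motzkin q m (D : 'M[R]_(q, m)) :
  exists q' (W : 'M[R]_(q', q)), nnegmx W /\
    forall u : 'cV[R]_q, (exists y, nnegmx (u + D *m y)) <-> nnegmx (W *m u).
Proof.
elim: m q D => [|m IH] q D.
  exists q, 1%:M; split=> [i j | u]; first by rewrite mxE ler0n.
  by rewrite mul1mx; split=> [[y] | u0]; [rewrite [y]flatmx0 | exists 0]; rewrite mulmx0 addr0.
move: D; rewrite -(add1n m) => D.
have [q1 [W1 [W1_ge0 W1P]]] := fourier_motzkin_step (lsubmx D).
have [q2 [W2 [W2_ge0 W2P]]] := IH _ (W1 *m rsubmx D).
exists q2, (W2 *m W1); split=> [|u]; first exact: nnegmx_mul.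
rewrite -mulmxA -W2P.
have DE s (y : 'cV_m) : D *m col_mx (s%:M : 'M_1) y = s *: lsubmx D + rsubmx D *m y.
  by rewrite -{1}[D]hsubmxK mul_row_col mul_mx_scalar.
split=> [[y uy0] | [y]]; last first.
  rewrite -mulmxA -mulmxDr => /W1P [s uys0].
  by exists (col_mx s%:M y); rewrite DE [s *: _ + _]addrC addrA.
exists (dsubmx y); rewrite -mulmxA -mulmxDr; apply/W1P.
exists (usubmx y 0 0).
move: uy0; rewrite -[y in D *m y]vsubmxK [X in col_mx X _]mx11_scalar DE.
by rewrite [_ *: _ + _]addrC addrA.
Qed.

End LinearInequalities.

Section Balls.
Local Set Implicit Arguments. Local Unset Strict Implicit.
Variables (R : realType) (p : nat).

Lemma uniform_radius (T : finType) (Q : T -> R -> Prop) :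
  (forall c e e', 0 < e' -> e' <= e -> Q c e -> Q c e') ->
  (forall c, exists2 e, 0 < e & Q c e) -> exists2 e, 0 < e & forall c, Q c e.
Proof.
move=> Q_anti Q_ex.
have [f fP] : exists f : T -> R, forall c, 0 < f c /\ Q c (f c).
  apply: (fin_all_exists (P := fun c e => 0 < e /\ Q c e)) => c.
  by have [e e0 Qe] := Q_ex c; exists e.
exists (\big[Order.min/1]_c f c) => [|c].
  by apply/bigmin_gtP; split=> // c _; case: (fP c).
have [fc0 Qfc] := fP c; apply: Q_anti Qfc; last exact: bigmin_le.
by apply/bigmin_gtP; split=> // c' _; case: (fP c').
Qed.

Lemma in_ball_le (b r : 'cV[R]_p) e e' : e <= e' -> in_ball b e r -> in_ball b e' r.
Proof. by move=> ee' br i; apply: lt_le_trans (br i) ee'. Qed.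

Lemma mulmx_in_ball q (B : 'M[R]_(q, p)) (b : 'cV[R]_p) k eps : 0 < eps ->
  exists2 delta, 0 < delta &
    forall r, in_ball b delta r -> `|(B *m r) k 0 - (B *m b) k 0| < eps.
Proof.
move=> eps0; pose K := 1 + \sum_i `|B k i|.
have K0 : 0 < K by rewrite ltr_pwDl // sumr_ge0.
exists (eps / K) => [|r br]; first exact: divr_gt0.
rewrite !mxE -sumrB.
apply: (le_lt_trans (ler_norm_sum _ _ _)).
apply: (@le_lt_trans _ _ (\sum_i `|B k i| * (eps / K))).
  apply: ler_sum => i _; rewrite -mulrBr normrM ler_wpM2l // ltW //.
rewrite -mulr_suml -[X in _ < X](divfK (lt0r_neq0 K0)) mulrC ltr_pM2l ?divr_gt0 //.
by rewrite ltrDr.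
Qed.

End Balls.

Section PolyhedralEpigraph.
Local Set Implicit Arguments. Local Unset Strict Implicit.
Variables (R : realType) (p q : nat) (B : 'M[R]_(q, p)) (e beta : 'cV[R]_q).
Hypothesis beta_ge0 : nnegmx beta.

Local Notation sat r t := (nnegmx (B *m r + e + t *: beta)).

Let satE r t k : (B *m r + e + t *: beta) k 0 = (B *m r) k 0 + e k 0 + t * beta k 0.
Proof. by rewrite 2!mxE [X in _ + X]mxE. Qed.

Lemma sat_min r t1 t2 : sat r t1 -> ~ sat r t2 ->
  exists t0, sat r t0 /\ forall t, sat r t -> t0 <= t.
Proof.
move=> st1 /nnegcvPn [k0]; rewrite satE => k0_lt0.
pose a k := (B *m r) k 0 + e k 0.
have beta_k0 : 0 < beta k0 0.
  rewrite lt_def beta_ge0 andbT; apply/eqP => beta0.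
  by move: k0_lt0 (st1 k0 0); rewrite satE beta0 !mulr0; lra.
have satP t : sat r t <-> forall k, 0 < beta k 0 -> - a k / beta k 0 <= t.
  split=> [st k beta_k | bound k j].
    by have := st k 0; rewrite satE ler_pdivrMr // /a; lra.
  rewrite (ord1 j) satE; have [beta0 | beta_k] := eqVneq (beta k 0) 0.
    by have := st1 k 0; rewrite satE beta0 !mulr0.
  have {}beta_k : 0 < beta k 0 by rewrite lt_def beta_k beta_ge0.
  by have := bound k beta_k; rewrite ler_pdivrMr // /a; lra.
exists (\big[Order.max/- a k0 / beta k0 0]_(k | 0 < beta k 0) (- a k / beta k 0)).
split=> [|t /satP bound]; first by apply/satP => k beta_k; apply: le_bigmax_cond.
by apply/bigmax_leP; split=> //; apply: bound.
Qed.

Lemma sat_violation_stable b t1 : ~ sat b t1 ->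
  exists2 eps, 0 < eps & forall r t, in_ball b eps r -> t <= t1 + eps -> ~ sat r t.
Proof.
move=> /nnegcvPn [k]; rewrite satE; set d := _ + _ + _ => d_lt0.
have dE : d = (B *m b) k 0 + e k 0 + t1 * beta k 0 by [].
have beta_k := beta_ge0 k 0; have d2 : 0 < - d / 2 by rewrite divr_gt0 ?oppr_gt0.
have [delta delta0 near] := mulmx_in_ball B b k d2.
pose eps := Order.min delta (- d / 2 / (1 + beta k 0)).
have eps0 : 0 < eps by rewrite lt_min delta0 divr_gt0 ?ltr_pwDl.
have eps_le : eps * (1 + beta k 0) <= - d / 2.
  by rewrite -ler_pdivlMr ?ltr_pwDl // ge_min lexx orbT.
have eps_delta : eps <= delta by rewrite ge_min lexx.
exists eps => // r t br tt1 /(_ k 0); rewrite satE.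
have := near r (in_ball_le eps_delta br); rewrite ltr_norml => /andP[_ Br].
have : 0 <= (t1 + eps - t) * beta k 0 by rewrite mulr_ge0 // subr_ge0.
nra.
Qed.

Lemma sat_stable b t0 delta : sat b t0 -> 0 < delta ->
  (exists2 eps, 0 < eps & forall r, in_ball b eps r -> exists t, sat r t) ->
  exists2 eps, 0 < eps & forall r, in_ball b eps r -> sat r (t0 + delta).
Proof.
move=> st0 delta0 [eps1 eps1_gt0 feas].
have [eps eps0 near] : exists2 eps, 0 < eps &
    forall k r, in_ball b eps r -> 0 <= (B *m r + e + (t0 + delta) *: beta) k 0.
  apply: uniform_radius => [k eps eps' _ le_eps Qk r /(in_ball_le le_eps) | k].
    exact: Qk.
  (* Rows with [beta k 0 = 0] do not involve [t], so they hold wherever the system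
     is satisfiable. *)
  have [beta0 | beta_k] := eqVneq (beta k 0) 0.
    exists eps1 => // r /feas [t /(_ k 0)].
    by rewrite !satE beta0 !mulr0.
  have {}beta_k : 0 < beta k 0 by rewrite lt_def beta_k beta_ge0.
  have [eps eps0 near] := mulmx_in_ball B b k (mulr_gt0 beta_k delta0).
  exists eps => // r /near; rewrite ltr_norml => /andP[Br _].
  by have := st0 k 0; rewrite !satE; nra.
by exists eps => // r br; apply/nnegcvP => k; apply: near.
Qed.

Lemma sat_bounded_below b t0 t1 : sat b t0 -> ~ sat b t1 ->
  forall r, exists t, ~ sat r t.
Proof.
move=> st0 /nnegcvPn [k]; rewrite satE => viol r.
have beta_k : 0 < beta k 0.
  rewrite lt_def beta_ge0 andbT; apply/eqP => beta0.
  by move: viol (st0 k 0); rewrite satE beta0 !mulr0; lra.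
exists (- ((B *m r) k 0 + e k 0 + 1) / beta k 0) => /(_ k 0).
by rewrite satE divfK ?gt_eqF //; lra.
Qed.

End PolyhedralEpigraph.

Section MixedBinaryLP.
Local Set Implicit Arguments. Local Unset Strict Implicit.
Variables (R : realType) (p n m : nat).
Variables (A : 'M[R]_(p, n)) (G : 'M[R]_(p, m)) (cx : 'cV[R]_n) (cy : 'cV[R]_m).

Local Notation feasible := (mblp_feasible A G).
Local Notation obj := (mblp_obj cx cy).

Definition mblp_epi r x t := exists y, feasible r x y /\ obj x y <= t.

Definition mblp_fixed_optimal r x y :=
  feasible r x y /\ forall y', feasible r x y' -> obj x y <= obj x y'.

Lemma binary_vecP (x : 'cV[R]_n) :
  binary_vec x <-> exists c : 'cV[bool]_n, x = map_mx (fun a : bool => a%:R) c.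
Proof.
split=> [xb | [c ->] i]; last by rewrite mxE; case: (c i 0); [right | left].
exists (map_mx (fun a => a == 1) x); apply/matrixP => i j; rewrite !mxE (ord1 j).
by case: (xb i) => ->; rewrite ?eqxx // eq_sym oner_eq0.
Qed.

Lemma mblp_epi_binary r x t : mblp_epi r x t -> binary_vec x.
Proof. by case=> y [[]]. Qed.

Lemma mblp_epi_polyhedral x : binary_vec x ->
  exists q (B : 'M[R]_(q, p)) (e beta : 'cV[R]_q), nnegmx beta /\
    forall r t, mblp_epi r x t <-> nnegmx (B *m r + e + t *: beta).
Proof.
(* [t] enters only the objective row, with coefficient 1; as [W >= 0], the
   t-column [rsubmx W] of the eliminated system is nonnegative. *)
move=> xb; have [q [W [W0 WP]]] := fourier_motzkin (col_mx G (- cy^T)).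
exists q, (- lsubmx W), (lsubmx W *m (A *m x) - rsubmx W *m (cx^T *m x)), (rsubmx W).
split=> [i j | r t]; first by rewrite mxE.
have -> : - lsubmx W *m r + (lsubmx W *m (A *m x) - rsubmx W *m (cx^T *m x)) + t *: rsubmx W
    = W *m col_mx (A *m x - r) (t%:M - cx^T *m x).
  rewrite -[X in _ = X *m _]hsubmxK mul_row_col !mulmxBr mul_mx_scalar mulNmx.
  by apply/matrixP => i j; rewrite !mxE; lra.
rewrite -WP; have epiE y :
    nnegmx (col_mx (A *m x - r) (t%:M - cx^T *m x) + col_mx G (- cy^T) *m y) <->
    feasible r x y /\ obj x y <= t.
  rewrite mul_col_mx mulNmx add_col_mx nnegmx_col_mx !nnegcvP /mblp_feasible /mblp_obj.
  split=> [[Ay0 cy0] | [[_ Ay0] cy0]]; first split; first split=> // i.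
  - by have := Ay0 i; rewrite !mxE; lra.
  - by have := cy0 0; rewrite !mxE eqxx mulr1n; lra.
  - split=> i; [move: (Ay0 i) | move: cy0; rewrite (ord1 i)].
      by rewrite !mxE; lra.
    by rewrite !mxE eqxx mulr1n; lra.
by split=> -[y /epiE yP]; exists y.
Qed.

Lemma mblp_fixed_optimal_exists r x :
  (exists y, feasible r x y) -> (exists t, forall y, feasible r x y -> t <= obj x y) ->
  exists y, mblp_fixed_optimal r x y.
Proof.
move=> [y1 f1] [t lb]; have [q [B [e [beta [beta0 epiE]]]]] := mblp_epi_polyhedral f1.1.
have /epiE s1 : mblp_epi r x (obj x y1) by exists y1.
have ns2 : ~ nnegmx (B *m r + e + (t - 1) *: beta).
  by move/epiE => [y [fy oy]]; have := lb y fy; lra.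
have [t0 [/epiE [y0 [f0 o0]] t0_min]] := sat_min beta0 s1 ns2.
by exists y0; split=> // y fy; apply: le_trans o0 (t0_min _ _); apply/epiE; exists y.
Qed.

Lemma mblp_not_epi_stable b x v : binary_vec x -> ~ mblp_epi b x v ->
  exists2 eps, 0 < eps &
    forall r t, in_ball b eps r -> t <= v + eps -> ~ mblp_epi r x t.
Proof.
move=> xb; have [q [B [e [beta [beta0 epiE]]]]] := mblp_epi_polyhedral xb.
move=> /epiE /(sat_violation_stable beta0) [eps eps0 far].
by exists eps => // r t br tv /epiE; apply: far.
Qed.

Lemma mblp_epi_stable b x t0 delta : mblp_epi b x t0 -> 0 < delta ->
  (exists2 eps, 0 < eps & forall r, in_ball b eps r -> exists y, feasible r x y) ->
  exists2 eps, 0 < eps & forall r, in_ball b eps r -> mblp_epi r x (t0 + delta).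
Proof.
move=> epi0; have xb := mblp_epi_binary epi0.
have [q [B [e [beta [beta0 epiE]]]]] := mblp_epi_polyhedral xb.
move: epi0 => /epiE st0 delta0 [eps1 eps1_gt0 feas].
have sat_near : exists2 eps, 0 < eps &
    forall r, in_ball b eps r -> exists t, nnegmx (B *m r + e + t *: beta).
  by exists eps1 => // r /feas [y fy]; exists (obj x y); apply/epiE; exists y.
have [eps eps0 near] := sat_stable beta0 st0 delta0 sat_near.
by exists eps => // r /near /epiE.
Qed.

Lemma mblp_bounded_near b x t0 t1 : mblp_epi b x t0 -> ~ mblp_epi b x t1 ->
  forall r, exists t, forall y, feasible r x y -> t <= obj x y.
Proof.
move=> epi0; have xb := mblp_epi_binary epi0.
have [q [B [e [beta [beta0 epiE]]]]] := mblp_epi_polyhedral xb.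
move: epi0 => /epiE st0 /epiE nst1 r; have [t nt] := sat_bounded_below beta0 st0 nst1 r.
exists t => y fy; rewrite leNgt; apply/negP => lt_obj.
by apply/nt/epiE; exists y; split=> //; apply: ltW.
Qed.

Lemma mblp_not_epi_uniform b xs v :
  (forall x, x != xs -> ~ mblp_epi b x v) ->
  exists2 eps, 0 < eps & forall x r t,
    x != xs -> in_ball b eps r -> t <= v + eps -> ~ mblp_epi r x t.
Proof.
move=> not_epi.
pose bin (c : 'cV[bool]_n) : 'cV[R]_n := map_mx (fun a : bool => a%:R) c.
have [eps eps0 far] : exists2 eps, 0 < eps & forall c r t,
    bin c != xs -> in_ball b eps r -> t <= v + eps -> ~ mblp_epi r (bin c) t.
  apply: uniform_radius => [c eps eps' _ le_eps far r t nc br tv | c].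
    by apply: far nc (in_ball_le le_eps br) _; lra.
  have [-> | nc] := eqVneq (bin c) xs; first by exists 1 => // r t; rewrite eqxx.
  have cb : binary_vec (bin c) by apply/binary_vecP; exists c.
  have [eps eps0 far] := mblp_not_epi_stable cb (not_epi _ nc).
  by exists eps => // r t _; apply: far.
exists eps => // x r t nx br tv epi_x.
have /binary_vecP [c xc] := mblp_epi_binary epi_x.
by rewrite xc in nx epi_x; apply: far epi_x.
Qed.

Lemma mblp_optimal_of_gap r xs y0 : mblp_fixed_optimal r xs y0 ->
  (forall x y, feasible r x y -> x != xs -> obj xs y0 < obj x y) ->
  (exists y, mblp_optimal A G cx cy r xs y) /\
  (forall x y, mblp_optimal A G cx cy r x y -> x = xs).
Proof.
move=> [f0 min0] gap; split.
  exists y0; split=> // x y fy; have [xE | nx] := eqVneq x xs.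
    by rewrite xE in fy *; apply: min0.
  exact/ltW/gap.
move=> x y [fy opt]; apply/eqP; apply: contraT => nx.
by have := opt xs y0 f0; rewrite leNgt gap.
Qed.

End MixedBinaryLP.

Theorem proposition1 (R : realType) (p n m : nat)
  (A : 'M[R]_(p, n)) (G : 'M[R]_(p, m)) (cx : 'cV[R]_n) (cy : 'cV[R]_m)
  (b : 'cV[R]_p) (xs : 'cV[R]_n) (ys : 'cV[R]_m) :
  mblp_optimal A G cx cy b xs ys ->
  (forall x y, mblp_optimal A G cx cy b x y -> x = xs) ->
  (exists2 eps : R, 0 < eps &
     forall bhat, in_ball b eps bhat -> exists y, mblp_feasible A G bhat xs y) ->
  exists2 eps : R, 0 < eps &
    forall bhat, in_ball b eps bhat ->
      (exists y, mblp_optimal A G cx cy bhat xs y) /\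
      (forall x y, mblp_optimal A G cx cy bhat x y -> x = xs).
Proof.
move=> [fs opt] uniq feas_near.
pose vs := mblp_obj cx cy xs ys.
have epi_s : mblp_epi A G cx cy b xs vs by exists ys.
have not_epi_below : ~ mblp_epi A G cx cy b xs (vs - 1).
  by move=> [y [fy oy]]; have := opt xs y fy; rewrite -/vs; lra.
have not_epi_others x : x != xs -> ~ mblp_epi A G cx cy b x vs.
  move=> /eqP nx [y [fy oy]]; apply/nx/(uniq x y); split=> // x' y' fy'.
  exact: le_trans oy (opt x' y' fy').
have [eL eL0 far] := mblp_not_epi_uniform not_epi_others.
have [eU eU0 near] := mblp_epi_stable epi_s eL0 feas_near.
exists (Order.min eL eU) => [|bh bh_ball]; first by rewrite lt_min eL0 eU0.
have bh_L : in_ball b eL bh by apply: in_ball_le bh_ball; rewrite ge_min lexx.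
have bh_U : in_ball b eU bh by apply: in_ball_le bh_ball; rewrite ge_min lexx orbT.
have [y1 [f1 o1]] := near bh bh_U.
have [y0 [f0 min0]] := mblp_fixed_optimal_exists (ex_intro _ y1 f1)
  (mblp_bounded_near epi_s not_epi_below bh).
apply: mblp_optimal_of_gap (conj f0 min0) _ => x y fy nx.
rewrite ltNge; apply/negP => le_obj; apply: (far x bh _ nx bh_L); last by exists y.
by have := min0 y1 f1; rewrite -/vs in o1; lra.
Qed.
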